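(* Let $d\ge1$, let $E\subset\mathbb{Z}^n$ be a (possibly infinite) $d$-sparse subset, and let $M$ be a paving matroid of rank $d+1$ on the ground set $E$. Then there exists a paving tropical ideal $I\subset\mathbb{B}[x_1^{\pm1},\dots,x_n^{\pm1}]$ of degree $d+1$ such that $\underline{M}(I|_E)=M$, i.e. the restriction of the underlying matroid of $I$ to $E$ equals $M$.
   Context: $\mathbb{B}=\{\infty,0\}$ with $\oplus=\min$ and multiplication $+$; $\operatorname{supp}(f)$ is the set of exponents with coefficient $\neq\infty$. A tropical ideal $I\subset\mathbb{B}[x_1^{\pm1},\dots,x_n^{\pm1}]$ is an ideal such that for all $f,g\in I$ and $\mathbf u\in\operatorname{supp}(f)\cap\operatorname{supp}(g)$ there is $h\in I$ with $\operatorname{supp}(f)\Delta\operatorname{supp}(g)\subset\operatorname{supp}(h)\subset(\operatorname{supp}(f)\cup\operatorname{supp}(g))\setminus\{\mathbf u\}$. Its underlying matroid $\underline M(I)$ on $\mathbb{Z}^n$ has as independent sets those containing no support of a polynomial in $I$; $\underline M(I|_E)$ is its restriction to $E$ (circuits: supports of polynomials of $I$ that are minimal and contained in $E$). $I$ is zero-dimensional of degree $r$ iff $\underline M(I)$ has finite rank $r$; it is a paving tropical ideal if moreover all circuits of $\underline M(I)$ have size $r$ or $r+1$. A (possibly infinite, finitary) matroid of finite rank $r$ is paving if all its circuits have size $r$ or $r+1$. $E\subset\mathbb{Z}^n$ is $d$-sparse if there is no $\mathbf u\neq\mathbf 0$ with $|E\cap(\mathbf u+E)|\ge d$. *)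

From HB Require Import structures.
From mathcomp Require Import all_boot all_order all_algebra.
From mathcomp Require Import finmap.
Set Implicit Arguments. Unset Strict Implicit. Unset Printing Implicit Defensive.
Import Order.TTheory GRing.Theory Num.Theory.
Local Open Scope fset_scope.

Definition zvec (n : nat) := 'rV[int]_n.

(* A Laurent polynomial over the Boolean semifield B = {oo, 0} (min, +)
   is determined by its support: the coefficient of x^u is 0 iff u \in f,
   and oo otherwise.  So we identify B[x_1^{+-1},...,x_n^{+-1}] with the
   finite subsets of Z^n. The zero polynomial is fset0. *)
Definition Bpoly (n : nat) := {fset zvec n}.

Definition supp {n} (f : Bpoly n) : {fset zvec n} := f.

(* Tropical sum (coefficientwise min) and product:
   (f (+) g)_u = min(f_u, g_u),  (f (.) g)_u = min_{a+b=u} (f_a + g_b). *)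
Definition Badd {n} (f g : Bpoly n) : Bpoly n := f `|` g.
Definition Bmul {n} (f g : Bpoly n) : Bpoly n :=
  [fset (a + b)%R | a in f, b in g].

Definition is_ideal {n} (I : Bpoly n -> Prop) : Prop :=
  [/\ I fset0,
      (forall f g, I f -> I g -> I (Badd f g)) &
      (forall f g, I f -> I (Bmul g f))].

Definition tropical_ideal {n} (I : Bpoly n -> Prop) : Prop :=
  is_ideal I /\
  forall f g u, I f -> I g -> u \in supp f -> u \in supp g ->
    exists h, I h /\
      ((supp f `\` supp g) `|` (supp g `\` supp f)) `<=` supp h /\
      supp h `<=` (supp f `|` supp g) `\ u.

(* Underlying matroid of I on Z^n : a set is independent iff it contains
   no support of a (nonzero) polynomial of I.  (The zero polynomial has
   empty support, which is contained in every set, so it must be excluded.) *)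
Definition ul_indep {n} (I : Bpoly n -> Prop) (A : zvec n -> Prop) : Prop :=
  forall f, I f -> f != fset0 -> ~ (forall u, u \in supp f -> A u).

Definition ul_circuit {n} (I : Bpoly n -> Prop) (C : {fset zvec n}) : Prop :=
  (exists f, [/\ I f, f != fset0 & supp f = C]) /\
  forall g, I g -> g != fset0 -> ~ (supp g `<` C).

Definition ul_rank_eq {n} (I : Bpoly n -> Prop) (r : nat) : Prop :=
  (exists A : {fset zvec n}, ul_indep I (fun u => u \in A) /\ #|` A| = r) /\
  (forall A : {fset zvec n}, ul_indep I (fun u => u \in A) -> #|` A| <= r).

Definition zero_dim_deg {n} (I : Bpoly n -> Prop) (r : nat) : Prop :=
  tropical_ideal I /\ ul_rank_eq I r.

Definition paving_tropical_ideal {n} (I : Bpoly n -> Prop) (r : nat) : Prop :=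
  zero_dim_deg I r /\
  forall C, ul_circuit I C -> #|` C| = r \/ #|` C| = r.+1.

(* A (finitary) matroid of finite rank on a ground set E \subset Z^n.
   Since the rank is finite, all independent sets are finite, so it is
   given by its family of (finite) independent sets. *)
Record matroid_on {n} (E : zvec n -> Prop) := Matroid {
  m_indep : {fset zvec n} -> Prop;
  m_ground : forall A, m_indep A -> forall u, u \in A -> E u;
  m_indep0 : m_indep fset0;
  m_subset : forall A B, B `<=` A -> m_indep A -> m_indep B;
  m_augment : forall A B, m_indep A -> m_indep B -> #|` A| < #|` B| ->
                exists2 x, x \in B `\` A & m_indep (x |` A);
  m_bounded : exists r, forall A, m_indep A -> #|` A| <= r
}.

Definition m_rank_eq {n} {E : zvec n -> Prop} (M : matroid_on E) (r : nat) :=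
  (exists A, m_indep M A /\ #|` A| = r) /\
  (forall A, m_indep M A -> #|` A| <= r).

Definition m_circuit {n} {E : zvec n -> Prop} (M : matroid_on E)
  (C : {fset zvec n}) : Prop :=
  (forall u, u \in C -> E u) /\ ~ m_indep M C /\
  forall B, B `<` C -> m_indep M B.

Definition paving_matroid {n} {E : zvec n -> Prop} (M : matroid_on E)
  (r : nat) : Prop :=
  m_rank_eq M r /\ forall C, m_circuit M C -> #|` C| = r \/ #|` C| = r.+1.

Definition sparse {n} (d : nat) (E : zvec n -> Prop) : Prop :=
  ~ exists u : zvec n, u != 0%R /\
      exists S : {fset zvec n}, d <= #|` S| /\
        forall x, x \in S -> E x /\ E (x - u)%R.

Definition restriction_eq {n} (I : Bpoly n -> Prop) {E : zvec n -> Prop}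
  (M : matroid_on E) : Prop :=
  forall A : {fset zvec n},
    ((forall u, u \in A -> E u) /\ ul_indep I (fun u => u \in A)) <-> m_indep M A.

From HB Require Import structures.
From mathcomp Require Import all_boot all_order all_algebra.
From mathcomp Require Import finmap zify.
From Stdlib Require Import Classical ClassicalEpsilon.
Set Implicit Arguments. Unset Strict Implicit. Unset Printing Implicit Defensive.
Import GRing.Theory.
Local Open Scope fset_scope.

(* Let K be the family of (d+1)-subsets of Z^n that are translates of
   dependent (d+1)-subsets of M.  Because E is d-sparse, two translates that
   share d points are translates by the same vector, and the paving axioms of
   M then show that K is "closed": if T1, T2 in K meet in >= d points, every
   (d+1)-subset of T1 \cup T2 lies in K.  Such a family K is the set of
   dependent (d+1)-sets of a paving matroid of rank d+1 on Z^n, which we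
   handle through its closure operator [in_closure] without constructing
   the matroid.  The ideal I consists of the cyclic sets of this matroid
   (finite sets each of whose points lies in the closure of the others). *)

Lemma fsub_card_eq (T : choiceType) (A B : {fset T}) :
  A `<=` B -> #|`B| <= #|`A| -> A = B.
Proof. by move=> sAB cBA; apply/eqP; rewrite eqEfcard sAB cBA. Qed.

Lemma fsubset_of_card (T : choiceType) (A : {fset T}) k :
  k <= #|`A| -> exists B, B `<=` A /\ #|`B| = k.
Proof.
elim: k => [|k IH] ltkA; first by exists fset0; rewrite fsub0set cardfs0.
have [B [sBA cB]] := IH (ltnW ltkA).
have : ~~ (A `<=` B).
  by apply/negP=> /fsubset_leq_card; rewrite cB; move: ltkA; clear; lia.
case/fsubsetPn=> x xA xB; exists (x |` B); split.
  by rewrite fsubUset fsub1set xA sBA.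
by rewrite cardfsU1 xB cB.
Qed.

Lemma card_swap (T : choiceType) (A : {fset T}) x y :
  y \in A -> x \notin A -> #|` x |` (A `\ y)| = #|`A|.
Proof.
by move=> yA xA; rewrite cardfsU1 (cardfsD1 y A) yA in_fsetD1 (negbTE xA) andbF.
Qed.

(* A family K of (d+1)-sets is closed if any (d+1)-subset of the union of two
   members sharing d points is again a member: these are the dependent
   (d+1)-sets of a paving matroid of rank d+1. *)
Definition closed_family (T : choiceType) (K : {fset T} -> Prop) (d : nat) :=
  forall T1 T2 Z, K T1 -> K T2 -> d <= #|`T1 `&` T2| -> Z `<=` T1 `|` T2 ->
    #|`Z| = d.+1 -> K Z.

Section ClosedFamily.

Variables (T : choiceType) (K : {fset T} -> Prop) (d : nat).
Implicit Types (A B C X Y Z f g h : {fset T}) (a b u v w x y z : T).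
Hypothesis K_card : forall X, K X -> #|`X| = d.+1.
Hypothesis K_closed : closed_family K d.

(* A has rank at most d: all its (d+1)-subsets are dependent. *)
Definition saturated A :=
  forall Y, Y `<=` A -> #|`Y| = d.+1 -> K Y.

(* A contains an independent (d+1)-set, i.e. A spans the whole matroid. *)
Definition spanning A :=
  exists Y, Y `<=` A /\ #|`Y| = d.+1 /\ ~ K Y.

Definition in_closure A x :=
  (exists X, X `<=` x |` A /\ x \in X /\ K X) \/ spanning A.

(* Cyclic sets (unions of circuits): each point is in the closure of the
   others.  These are the supports of the tropical ideal we construct. *)
Definition cyclic f := forall x, x \in f -> in_closure (f `\ x) x.

Lemma saturatedVspanning A : saturated A \/ spanning A.
Proof.
case: (classic (spanning A)) => [|nsp]; [by right | left].
by move=> Y sYA cY; apply: NNPP => nKY; apply: nsp; exists Y.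
Qed.

Lemma in_closure_mono A B x : A `<=` B -> in_closure A x -> in_closure B x.
Proof.
move=> sAB [[X [sX [xX KX]]]|[Y [sY [cY KY]]]].
  by left; exists X; split=> //; apply: (fsubset_trans sX); apply: fsetUS.
by right; exists Y; split=> //; apply: fsubset_trans sY sAB.
Qed.

Lemma K_exchange X a b w :
  K X -> a \in X -> b \in X -> w \notin X -> K (w |` (X `\ a)) ->
  K (w |` (X `\ b)).
Proof.
move=> KX aX bX wX KXa; apply: (K_closed KX KXa).
- have /fsubset_leq_card : X `\ a `<=` X `&` (w |` (X `\ a)).
    by rewrite fsubsetI fsubD1set fsubsetU1.
  by have := K_card KX; rewrite (cardfsD1 a X) aX add1n => -[->].
- by rewrite fsubUset fsub1set !inE eqxx orbT /= fsubsetU // fsubD1set.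
- by rewrite card_swap // (K_card KX).
Qed.

Lemma saturated_add B u (X0 : {fset T}) :
  saturated B -> u \notin B -> X0 `<=` u |` B -> u \in X0 -> K X0 ->
  saturated (u |` B).
Proof.
move=> satB uB sX0 uX0 KX0 Z sZ cZ.
have [uZ|uZ] := boolP (u \in Z); last first.
  apply: satB cZ; apply/fsubsetP=> y yZ; have /fset1UP [ey|//] := fsubsetP sZ y yZ.
  by move: uZ; rewrite -ey yZ.
move: {2}#|`X0 `\` Z| (erefl #|`X0 `\` Z|) => k.
elim: k X0 sX0 uX0 KX0 => [|k IH] X0 sX0 uX0 KX0 ck.
  have sX0Z : X0 `<=` Z by rewrite -fsetD_eq0 -cardfs_eq0 ck.
  by rewrite -(fsub_card_eq sX0Z) // cZ (K_card KX0).
have /fset0Pn [v vD] : X0 `\` Z != fset0 by rewrite -cardfs_eq0 ck.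
move: (vD); rewrite in_fsetD => /andP [vZ vX0].
have /fsubsetPn [w wZ wX0] : ~~ (Z `<=` X0).
  apply/negP=> sZX0; move: vZ; rewrite (fsub_card_eq sZX0) ?vX0 //.
  by rewrite cZ (K_card KX0).
have wB : w \in B.
  by have /fset1UP [ew|//] := fsubsetP sZ w wZ; move: wX0; rewrite ew uX0.
have vu : v != u by apply: contraNneq vZ => ->.
have sX0B : X0 `\ u `<=` B by rewrite fsubDset.
have KX1 : K (w |` (X0 `\ v)).
  apply: (K_exchange KX0 uX0 vX0 wX0); apply: satB.
    by rewrite fsubUset fsub1set wB.
  by rewrite card_swap // (K_card KX0).
apply: (IH _ _ _ KX1).
- rewrite fsubUset fsub1set (fsubsetP sZ) //=.
  exact: fsubset_trans (fsubD1set _ _) sX0.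
- by rewrite fset1Ur // in_fsetD1 eq_sym vu.
- have -> : (w |` (X0 `\ v)) `\` Z = (X0 `\` Z) `\ v.
    apply/fsetP=> y; rewrite !inE.
    case: (eqVneq y w) => [->|_]; first by rewrite wZ andbF.
    by case: (y \in Z); case: (y != v).
  by move: ck; rewrite (cardfsD1 v (X0 `\` Z)) vD add1n => -[].
Qed.

Lemma in_closure_trans B u x :
  u \notin B -> x \notin B -> x != u -> in_closure B u -> in_closure (u |` B) x ->
  in_closure B x.
Proof.
move=> uB xB xu [[X0 [sX0 [uX0 KX0]]]|spB]; last by right.
have [satB|] := saturatedVspanning B; last by right.
have satuB := saturated_add satB uB sX0 uX0 KX0.
case=> [[X [sX [xX KX]]]|[Y [sY [cY KY]]]]; last by case: KY; apply: satuB.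
have [uX|uX] := boolP (u \in X); last first.
  left; exists X; split=> //; apply/fsubsetP=> y yX.
  have /fset1UP [->|/fset1UP [ey|yB]] := fsubsetP sX y yX; rewrite ?fset1U1 //.
    by move: uX; rewrite -ey yX.
  by rewrite fset1Ur.
have [w wB wX] : exists2 w, w \in B & w \notin X.
  apply/fsubsetPn/negP=> sBX.
  have /fsubset_leq_card : x |` (u |` B) `<=` X.
    by rewrite !fsubUset !fsub1set xX uX sBX.
  rewrite (K_card KX) !cardfsU1 uB !inE (negbTE xB) (negbTE xu) /=.
  have /fsubset_leq_card : X0 `\ u `<=` B by rewrite fsubDset.
  by have := K_card KX0; rewrite (cardfsD1 u X0) uX0 => h1 h2 h3; lia.
have KR : K (w |` (X `\ u)).
  apply: (K_exchange KX xX uX wX); apply: satuB.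
    by rewrite fsubUset fsub1set !inE wB orbT fsubDset.
  by rewrite card_swap // (K_card KX).
left; exists (w |` (X `\ u)); split; last by rewrite fset1Ur // in_fsetD1 xu.
by rewrite fsubUset fsub1set !inE wB orbT fsubDset fsetUCA.
Qed.

Lemma K_cyclic X : K X -> cyclic X.
Proof. by move=> KX y yX; left; exists X; rewrite fsetD1K. Qed.

Lemma closure_cyclic A x :
  x \notin A -> in_closure A x -> exists C, C `<=` x |` A /\ x \in C /\ cyclic C.
Proof.
move=> xA clx.
case: (classic (exists X, X `<=` x |` A /\ x \in X /\ K X)) => [[X [sX [xX KX]]]|noX].
  by exists X; split=> //; split=> //; apply: K_cyclic.
case: clx => [//|[Y [sY [cY KY]]]].
have xY : x \notin Y by apply: contraNN xA => /(fsubsetP sY).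
exists (x |` Y); split; first exact: fsetUS.
split=> [|y /fset1UP [->|yY]]; first exact: fset1U1.
  by right; exists Y; rewrite fsetU1K.
right; exists ((x |` Y) `\ y); split=> //; split.
  by have := cardfsD1 y (x |` Y); rewrite fset1Ur // cardfsU1 xY cY add1n => -[].
move=> KxY; apply: noX; exists ((x |` Y) `\ y); split.
  exact: fsubset_trans (fsubD1set _ _) (fsetUS _ sY).
split=> //; rewrite in_fsetD1 fset1U1 andbT.
by apply: contraNneq xY => ->.
Qed.

Lemma cyclic_cover h :
  (forall x, x \in h -> exists C, C `<=` h /\ x \in C /\ cyclic C) -> cyclic h.
Proof.
move=> cover x xh; have [C [sC [xC cycC]]] := cover x xh.
by apply: in_closure_mono (cycC x xC); apply: fsetSD.
Qed.

Lemma cyclic_card f : cyclic f -> f != fset0 -> d.+1 <= #|`f|.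
Proof.
move=> cycf /fset0Pn [x xf].
case: (cycf x xf) => [[X [sX [_ KX]]]|[Y [sY [cY _]]]].
  by rewrite fsetD1K // in sX; rewrite -(K_card KX); apply: fsubset_leq_card.
by move/fsubset_leq_card: sY; rewrite cY (cardfsD1 x f) xf; lia.
Qed.

(* Every set of size d+2 contains a nonempty cyclic set: the matroid has
   rank at most d+1. *)
Lemma large_has_cyclic A :
  d.+2 <= #|`A| -> exists f, f `<=` A /\ f != fset0 /\ cyclic f.
Proof.
move=> cA; have : A != fset0 by rewrite -cardfs_gt0; lia.
case/fset0Pn=> x xA.
have [Y [sY cY]] : exists Y, Y `<=` A `\ x /\ #|`Y| = d.+1.
  by apply: fsubset_of_card; move: cA; rewrite (cardfsD1 x A) xA; lia.
case: (classic (K Y)) => KY.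
  exists Y; split; first exact: fsubset_trans sY (fsubD1set _ _).
  by split; [rewrite -cardfs_gt0 cY | apply: K_cyclic].
have clx : in_closure (A `\ x) x by right; exists Y.
have [C [sC [xC cycC]]] := closure_cyclic (negbT (fsetD11 x A)) clx.
exists C; split; first by rewrite fsetD1K in sC.
by split=> //; apply/fset0Pn; exists x.
Qed.

Lemma elimination_point f g u z :
  cyclic f -> cyclic g -> u \in g -> z \in f -> z \notin g ->
  exists C, C `<=` (f `|` g) `\ u /\ z \in C /\ cyclic C.
Proof.
move=> cycf cycg ug zf zg.
have zu : z != u by apply: contraNneq zg => ->.
set B := ((f `|` g) `\ u) `\ z.
have uB : u \notin B by rewrite !inE eqxx andbF.
have zB : z \notin B by rewrite !inE eqxx.
have clz : in_closure (u |` B) z.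
  apply: in_closure_mono (cycf z zf); apply/fsubsetP=> y.
  rewrite in_fsetD1 => /andP [yz yf].
  case: (eqVneq y u) => [->|yu]; first exact: fset1U1.
  by apply: fset1Ur; rewrite !inE yz yu yf.
have clu : in_closure B u.
  apply: in_closure_mono (cycg u ug); apply/fsubsetP=> y.
  rewrite in_fsetD1 => /andP [yu yg].
  have yz : y != z by apply: contraNneq zg => <-.
  by rewrite !inE yz yu yg orbT.
have [C [sC [zC cycC]]] := closure_cyclic zB (in_closure_trans uB zB zu clu clz).
exists C; split=> //; apply: (fsubset_trans sC); rewrite fsetD1K //.
by rewrite !inE zu zf.
Qed.

(* Classical boolean reflection of a proposition, used to carve a finite set
   out of W by a property that is not decidable. *)
Definition holds (P : Prop) : bool :=
  if excluded_middle_informative P then true else false.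

Lemma holdsP (P : Prop) : reflect P (holds P).
Proof. by rewrite /holds; case: excluded_middle_informative => h; constructor. Qed.

(* Circuit elimination for cyclic sets: the union of all cyclic subsets of
   (f + g) - u contains the symmetric difference of f and g. *)
Lemma cyclic_elimination f g u :
  cyclic f -> cyclic g -> u \in f -> u \in g ->
  exists h, cyclic h /\
    ((f `\` g) `|` (g `\` f)) `<=` h /\ h `<=` (f `|` g) `\ u.
Proof.
move=> cycf cycg uf ug.
set W := (f `|` g) `\ u.
set h := [fset z in W | holds (exists C, C `<=` W /\ z \in C /\ cyclic C)].
have hP z : z \in h <-> z \in W /\ exists C, C `<=` W /\ z \in C /\ cyclic C.
  by rewrite !inE /=; split=> [/andP [-> /holdsP]|[-> /holdsP ->]].
exists h; split; last split.
- apply: cyclic_cover => z /hP [_ [C [sC [zC cycC]]]]; exists C; split=> //.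
  apply/fsubsetP=> y yC; apply/hP; split; first exact: (fsubsetP sC).
  by exists C.
- apply/fsubsetP=> z; rewrite in_fsetU !in_fsetD => /orP [/andP [zg zf]|/andP [zf zg]].
    have [C [sC [zC cycC]]] := elimination_point cycf cycg ug zf zg.
    by apply/hP; split; [exact: (fsubsetP sC) | exists C].
  have [C [sC [zC cycC]]] := elimination_point cycg cycf uf zg zf.
  rewrite fsetUC in sC.
  by apply/hP; split; [exact: (fsubsetP sC) | exists C].
- by apply/fsubsetP=> z /hP [].
Qed.

End ClosedFamily.

Section Translations.

Variable n : nat.
Implicit Types (A X f : {fset zvec n}) (a x y : zvec n).

Definition shift A a : {fset zvec n} := [fset (x + a)%R | x in A].

Lemma in_shift A a y : (y \in shift A a) = ((y - a)%R \in A).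
Proof.
apply/imfsetP/idP => [[x xA ->]|h]; first by rewrite addrK.
by exists (y - a)%R => //; rewrite subrK.
Qed.

Lemma card_shift A a : #|` shift A a| = #|`A|.
Proof. by rewrite card_imfset //=; apply: addIr. Qed.

Lemma shift0 A : shift A 0%R = A.
Proof. by apply/fsetP=> y; rewrite in_shift subr0. Qed.

Lemma shiftD A a b : shift (shift A a) b = shift A (a + b)%R.
Proof. by apply/fsetP=> y; rewrite !in_shift opprD addrA [(y - a - b)%R]addrAC. Qed.

Lemma shiftK A a : shift (shift A a) (- a)%R = A.
Proof. by rewrite shiftD subrr shift0. Qed.

Lemma shiftU1 A x a : shift (x |` A) a = (x + a)%R |` shift A a.
Proof. by apply/fsetP=> y; rewrite !inE !in_shift !inE subr_eq. Qed.

Lemma shiftS A B a : A `<=` B -> shift A a `<=` shift B a.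
Proof. by move=> sAB; apply/fsubsetP=> y; rewrite !in_shift => /(fsubsetP sAB). Qed.

Section InvariantFamily.

Variables (K : {fset zvec n} -> Prop) (d : nat).
Hypothesis K_shift : forall X a, K X -> K (shift X a).

Lemma cyclic_shift f a : cyclic K d f -> cyclic K d (shift f a).
Proof.
move=> cycf z; rewrite in_shift => zf.
have shiftD1 : shift (f `\ (z - a)%R) a = shift f a `\ z.
  by apply/fsetP=> y; rewrite in_shift !in_fsetD1 in_shift (inj_eq (addIr _)).
case: (cycf _ zf) => [[X [sX [zX KX]]]|[Y [sY [cY KY]]]].
  left; exists (shift X a); split; last by rewrite in_shift; split=> //; apply: K_shift.
  by have := shiftS a sX; rewrite shiftU1 subrK shiftD1.
right; exists (shift Y a); split; last split.
- by rewrite -shiftD1; apply: shiftS.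
- by rewrite card_shift.
- by move=> /(K_shift (- a)%R); rewrite shiftK.
Qed.

(* Cyclic sets of a translation-invariant family form an ideal of B[x^{+-1}]:
   a product g (.) f is the union of the translates of f by the points of g. *)
Lemma cyclic_ideal : is_ideal (cyclic K d).
Proof.
split; first by move=> x; rewrite inE.
  move=> f g cycf cycg; apply: cyclic_cover => x; rewrite /Badd in_fsetU.
  by case/orP=> [xf|xg]; [exists f | exists g]; rewrite ?fsubsetUl ?fsubsetUr.
move=> f g cycf; apply: cyclic_cover => z /imfset2P [a ag [b bf ->]].
exists (shift f a); split; last split.
- apply/fsubsetP=> y; rewrite in_shift => yf.
  by rewrite -(subrK a y) addrC; apply: in_imfset2.
- by rewrite in_shift [(a + b)%R]addrC addrK.
- exact: cyclic_shift.
Qed.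

Lemma cyclic_tropical :
  (forall X, K X -> #|`X| = d.+1) -> closed_family K d ->
  tropical_ideal (cyclic K d).
Proof.
move=> K_card K_closed; split; first exact: cyclic_ideal.
move=> f g u cycf cycg uf ug.
have [h [cych hfg]] := cyclic_elimination K_card K_closed cycf cycg uf ug.
by exists h.
Qed.

End InvariantFamily.

End Translations.

Lemma dependent_has_circuit n (E : zvec n -> Prop) (M : matroid_on E)
    (A : {fset zvec n}) :
  (forall u, u \in A -> E u) -> ~ m_indep M A ->
  exists C, C `<=` A /\ m_circuit M C.
Proof.
move: {2}#|`A| (leqnn #|`A|) => k; elim: k A => [|k IH] A cA AE depA.
  exists A; split=> //; split=> //; split=> // B /fproper_ltn_card; lia.
case: (classic (forall B, B `<` A -> m_indep M B)) => [minA|].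
  by exists A; split.
move=> /not_all_ex_not [B /(imply_to_and (B `<` A)) [pBA depB]].
have sBA := fproper_sub pBA.
have [|||C [sCB circC]] := IH B; first by have := fproper_ltn_card pBA; lia.
- by move=> u /(fsubsetP sBA)/AE.
- exact: depB.
by exists C; split=> //; apply: fsubset_trans sCB sBA.
Qed.

Section PavingRealization.

Variables (n d : nat) (E : zvec n -> Prop) (M : matroid_on E).
Hypothesis E_sparse : sparse d E.
Hypothesis M_paving : paving_matroid M d.+1.
Implicit Types (A C X Y Z f : {fset zvec n}) (t x : zvec n).

Definition translate_dep X := #|`X| = d.+1 /\
  exists t C, X = shift C t /\ (forall z, z \in C -> E z) /\ ~ m_indep M C.

Definition realizing_ideal := cyclic translate_dep d.

Lemma translate_dep_card X : translate_dep X -> #|`X| = d.+1.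
Proof. by case. Qed.

Lemma translate_dep_shift X a : translate_dep X -> translate_dep (shift X a).
Proof.
case=> cX [t [C [eX [CE depC]]]]; split; first by rewrite card_shift.
by exists (t + a)%R, C; rewrite eX shiftD.
Qed.

Lemma sparse_same_shift C1 C2 t1 t2 :
  (forall z, z \in C1 -> E z) -> (forall z, z \in C2 -> E z) ->
  d <= #|`shift C1 t1 `&` shift C2 t2| -> t1 = t2.
Proof.
move=> C1E C2E cI; apply/eqP; apply: contraT => t12; case: E_sparse.
exists (t2 - t1)%R; split; first by rewrite subr_eq0 eq_sym.
exists (shift (shift C1 t1 `&` shift C2 t2) (- t1)%R); rewrite card_shift.
split=> // x; rewrite in_shift opprK in_fsetI !in_shift => /andP [x1 x2].
split; first by apply: C1E; rewrite -addrA subrr addr0 in x1.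
by apply: C2E; rewrite opprB addrA.
Qed.

Lemma paving_small_indep A :
  (forall u, u \in A -> E u) -> #|`A| <= d -> m_indep M A.
Proof.
move=> AE cA; apply: NNPP => depA.
have [C [sCA circC]] := dependent_has_circuit AE depA.
have := fsubset_leq_card sCA; have [_ circ_card] := M_paving.
by case: (circ_card C circC) => ->; lia.
Qed.

(* Translates of dependent (d+1)-sets form a closed family: two translates
   sharing d points come from the same translation vector, and then the
   paving axiom for M applies to their union. *)
Lemma translate_dep_closed : closed_family translate_dep d.
Proof.
move=> T1 T2 Z [cT1 [t [C1 [eT1 [C1E depC1]]]]] [cT2 [t2 [C2 [eT2 [C2E depC2]]]]].
move=> cI sZ cZ.
have et2 : t = t2 by apply: sparse_same_shift C1E C2E _; rewrite -eT1 -eT2.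
subst t2; split=> //; exists t, (shift Z (- t)%R).
split; first by rewrite shiftD addNr shift0.
have sZ' : shift Z (- t)%R `<=` C1 `|` C2.
  apply/fsubsetP=> z; rewrite in_shift opprK in_fsetU => /(fsubsetP sZ).
  by rewrite in_fsetU eT1 eT2 !in_shift !addrK.
split=> [z /(fsubsetP sZ')|indepZ']; first by rewrite in_fsetU => /orP [/C1E|/C2E].
have [J0 [sJ0 cJ0]] := fsubset_of_card cI.
set J := shift J0 (- t)%R.
have sJC1 : J `<=` C1.
  by rewrite -(shiftK C1 t) -eT1; apply/shiftS/(fsubset_trans sJ0)/fsubsetIl.
have sJC2 : J `<=` C2.
  by rewrite -(shiftK C2 t) -eT2; apply/shiftS/(fsubset_trans sJ0)/fsubsetIr.
have indepJ : m_indep M J.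
  apply: paving_small_indep; last by rewrite card_shift cJ0.
  by move=> u /(fsubsetP sJC1) /C1E.
have [|x] := m_augment indepJ indepZ'; first by rewrite !card_shift cJ0 cZ.
rewrite in_fsetD => /andP [xJ /(fsubsetP sZ')]; rewrite in_fsetU.
(* J + x is then one of the dependent (d+1)-sets C1, C2. *)
have full C : J `<=` C -> x \in C -> #|`C| = d.+1 -> x |` J = C.
  move=> sJC xC cC; apply: fsub_card_eq; first by rewrite fsubUset fsub1set xC.
  by rewrite cardfsU1 xJ card_shift cJ0 cC.
have cC1 : #|`C1| = d.+1 by rewrite -(card_shift C1 t) -eT1.
have cC2 : #|`C2| = d.+1 by rewrite -(card_shift C2 t) -eT2.
by case/orP=> xC; [rewrite (full C1) | rewrite (full C2)].
Qed.

(* M-independent sets contain no nonempty cyclic set: a dependent translate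
   inside an independent subset of E is, by sparseness, not translated at all,
   and a spanning subset would exceed the rank d+1. *)
Lemma indep_no_cyclic A f :
  m_indep M A -> realizing_ideal f -> f != fset0 -> ~ f `<=` A.
Proof.
move=> indepA cycf /fset0Pn [x xf] sfA; have AE := m_ground indepA.
case: (cycf x xf) => [[X [sX [_ [cX [t [C [eX [CE depC]]]]]]]]|[Y [sY [cY _]]]].
  have sXA : X `<=` A by rewrite fsetD1K // in sX; apply: fsubset_trans sX sfA.
  have t0 : t = 0%R.
    apply: (sparse_same_shift CE AE); rewrite shift0 -eX.
    by rewrite (fsetIidPl sXA) cX.
  by apply: depC; apply: m_subset indepA; rewrite -(shift0 C) -t0 -eX.
have [[_ rank_le] _] := M_paving; have := rank_le A indepA.
have /fsubset_leq_card : Y `<=` A `\ x by apply: fsubset_trans sY (fsetSD _ sfA).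
by rewrite cY (cardfsD1 x A) (fsubsetP sfA x xf); lia.
Qed.

(* M-dependent subsets of E contain a nonempty cyclic set: a circuit of
   size d+1 is itself in translate_dep, one of size d+2 is large. *)
Lemma dependent_has_cyclic A :
  (forall u, u \in A -> E u) -> ~ m_indep M A ->
  exists f, f `<=` A /\ f != fset0 /\ realizing_ideal f.
Proof.
move=> AE depA; have [C [sCA circC]] := dependent_has_circuit AE depA.
have [_ circ_card] := M_paving.
case: (circ_card C circC) => cC.
  exists C; split=> //; split; first by rewrite -cardfs_gt0 cC.
  apply: K_cyclic; split=> //; exists 0%R, C; rewrite shift0.
  by case: circC => CE [depC _].
have [f [sfC [nf cycf]]] : exists f, f `<=` C /\ f != fset0 /\ realizing_ideal f.
  by apply: large_has_cyclic; rewrite cC.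
by exists f; split=> //; apply: fsubset_trans sfC sCA.
Qed.

Lemma ul_indepP A : ul_indep realizing_ideal (fun u => u \in A) <->
  forall f, f `<=` A -> f != fset0 -> ~ realizing_ideal f.
Proof.
split=> [indepA f sfA nf cycf | noCyc f cycf nf sfA].
  by apply: (indepA f cycf nf) => u; apply: (fsubsetP sfA).
by apply: (noCyc f _ nf cycf); apply/fsubsetP=> u; apply: sfA.
Qed.

Lemma realizing_tropical : tropical_ideal realizing_ideal.
Proof.
exact: cyclic_tropical translate_dep_shift translate_dep_card translate_dep_closed.
Qed.

(* The underlying matroid has rank d+1: bases of M stay independent, and
   every (d+2)-set contains a nonempty cyclic set. *)
Lemma realizing_rank : ul_rank_eq realizing_ideal d.+1.
Proof.
have [[[B [indepB cB]] _] _] := M_paving.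
split.
  exists B; split=> //; apply/ul_indepP=> f sfB nf cycf.
  exact: indep_no_cyclic indepB cycf nf sfB.
move=> A /ul_indepP noCyc; rewrite leqNgt; apply/negP=> cA.
have [f [sfA [nf cycf]]] := large_has_cyclic translate_dep cA.
exact: noCyc sfA nf cycf.
Qed.

(* Circuits have d+1 or d+2 elements: a larger cyclic set minus a point
   still contains a nonempty cyclic set. *)
Lemma realizing_circuits C :
  ul_circuit realizing_ideal C -> #|`C| = d.+1 \/ #|`C| = d.+2.
Proof.
case=> [[f [cycf nf <-]] minf]; rewrite /supp.
have := cyclic_card translate_dep_card cycf nf.
case: (leqP #|`f| d.+2) => cf cf'; first lia.
case/fset0Pn: (nf) => x xf; exfalso.
have [g [sg [ng cycg]]] : exists g, g `<=` f `\ x /\ g != fset0 /\ realizing_ideal g.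
  by apply: large_has_cyclic; move: cf; rewrite (cardfsD1 x f) xf; lia.
apply: (minf g cycg ng); rewrite /supp fproperE (fsubset_trans sg (fsubD1set _ _)).
by apply/negP=> /fsubsetP/(_ x xf)/(fsubsetP sg); rewrite in_fsetD1 eqxx.
Qed.

Lemma realizing_restriction : restriction_eq realizing_ideal M.
Proof.
move=> A; split=> [[AE /ul_indepP noCyc]|indepA].
  apply: NNPP => depA; have [f [sfA [nf cycf]]] := dependent_has_cyclic AE depA.
  exact: noCyc sfA nf cycf.
split; first exact: m_ground indepA.
by apply/ul_indepP=> f sfA nf cycf; apply: indep_no_cyclic indepA cycf nf sfA.
Qed.

End PavingRealization.

Unset Implicit Arguments.

Theorem mainTheorem9 (n d : nat) (E : zvec n -> Prop) (M : matroid_on E) :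
  1 <= d -> sparse d E -> paving_matroid M d.+1 ->
  exists I : Bpoly n -> Prop,
    paving_tropical_ideal I d.+1 /\ restriction_eq I M.
Proof.
move=> _ E_sparse M_paving; exists (realizing_ideal d M).
split; last exact: realizing_restriction E_sparse M_paving.
split; last exact: realizing_circuits.
split; first exact: realizing_tropical E_sparse M_paving.
exact: realizing_rank E_sparse M_paving.
Qed.
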